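(* Let $m \le n$ and $1 \le k \le m$. Let $X$ be a normal operator on $\mathcal{H}_n \otimes \mathcal{H}_m$ with spectral decomposition $X = \sum_i \lambda_i |v_i\rangle\langle v_i|$, where $\{|v_i\rangle\}$ is an orthonormal basis of eigenvectors and $\lambda_i$ are the corresponding eigenvalues. Then \[ \|X\|_{S(k)} \le \sum_i |\lambda_i|\, \big\||v_i\rangle\big\|_{s(k)}^2. \]
   Context: $\mathcal{H}_d = \mathbb{C}^d$ and $m\le n$. $SR$ denotes Schmidt rank, i.e. the number of nonzero singular values of the coefficient matrix of a vector in $\mathcal{H}_n\otimes\mathcal{H}_m$. $\big\||v\rangle\big\|_{s(k)} := \sup\{|\langle w|v\rangle| : |w\rangle \text{ unit}, SR(|w\rangle)\le k\}$. By a known result this equals the square root of the sum of squares of the $k$ largest Schmidt coefficients of $|v\rangle$. $\|X\|_{S(k)} := \sup\{|\langle w|X|v\rangle| : |v\rangle,|w\rangle \text{ unit}, SR(|v\rangle),SR(|w\rangle)\le k\}$. *)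

From HB Require Import structures.
From mathcomp Require Import all_boot all_order all_algebra.
From mathcomp Require Import complex.
From mathcomp Require Import boolp classical_sets reals.
Set Implicit Arguments. Unset Strict Implicit. Unset Printing Implicit Defensive.
Import Order.TTheory GRing.Theory Num.Theory.
Local Open Scope ring_scope.
Local Open Scope classical_set_scope.

Section QDefs.
Variable R : realType.
Local Notation C := R[i].

Definition adjmx (p q : nat) (A : 'M[C]_(p, q)) : 'M[C]_(q, p) :=
  (map_mx (@conjc R) A)^T.

Definition inprod (d : nat) (w v : 'cV[C]_d) : C := (adjmx w *m v) ord0 ord0.

Definition is_unit_vec (d : nat) (v : 'cV[C]_d) : Prop := inprod v v = 1.

(* A vector of H_n (x) H_m = C^(n*m) (standard Kronecker ordering, index
   (i,j) |-> i*m + j) and its n x m coefficient matrix. *)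
Definition coefmx (n m : nat) (v : 'cV[C]_(n * m)) : 'M[C]_(n, m) := vec_mx v^T.
Arguments coefmx : clear implicits.

(* Schmidt rank: number of nonzero singular values = rank of coefficient matrix *)
Definition schmidt_rank (n m : nat) (v : 'cV[C]_(n * m)) : nat := \rank (coefmx n m v).
Arguments schmidt_rank : clear implicits.

Definition snorm_k (n m k : nat) (v : 'cV[C]_(n * m)) : R :=
  sup [set r : R | exists w : 'cV[C]_(n * m),
        [/\ is_unit_vec w, (schmidt_rank n m w <= k)%N & r = Normc.normc (inprod w v)]].

Definition Snorm_k (n m k : nat) (X : 'M[C]_(n * m)) : R :=
  sup [set r : R | exists v w : 'cV[C]_(n * m),
        [/\ is_unit_vec v, is_unit_vec w, (schmidt_rank n m v <= k)%N,
            (schmidt_rank n m w <= k)%N & r = Normc.normc (inprod w (X *m v))]].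

Definition normal_op (d : nat) (X : 'M[C]_d) : Prop := X *m adjmx X = adjmx X *m X.

Definition orthonormal_basis (d : nat) (V : 'I_d -> 'cV[C]_d) : Prop :=
  forall i j, inprod (V i) (V j) = (i == j)%:R.

End QDefs.
Arguments snorm_k {R} n m k v.
Arguments Snorm_k {R} n m k X.
Arguments schmidt_rank {R} n m v.
Arguments coefmx {R} n m v.

From HB Require Import structures.
From mathcomp Require Import all_boot all_order all_algebra.
From mathcomp Require Import complex.
From mathcomp Require Import boolp classical_sets reals.
Import Order.TTheory GRing.Theory Num.Theory.
Local Open Scope ring_scope.

(* Expanding X = sum_i lam_i |v_i><v_i| gives
   <w|X v> = sum_i lam_i <w|v_i> <v_i|v>, so by the triangle inequality
   |<w|X v>| <= sum_i |lam_i| |<w|v_i>| |<v|v_i>|.  When v and w are unit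
   vectors of Schmidt rank at most k, both |<w|v_i>| and |<v|v_i>| are bounded
   by ||v_i||_{s(k)}, and taking the supremum over v and w gives the claim. *)

Section SchmidtNormBound.
Variable R : realType.
Local Notation C := R[i].
Local Notation normc := (@Normc.normc R).

Lemma normc_ge0 (z : C) : 0 <= normc z.
Proof. by case: z => a b; rewrite /Normc.normc sqrtr_ge0. Qed.

Lemma normc_conj (z : C) : normc (z^*)%C = normc z.
Proof. by case: z => a b; rewrite /Normc.normc /= sqrrN. Qed.

Lemma normc_sum_le (I : Type) (r : seq I) (F : I -> C) :
  normc (\sum_(i <- r) F i) <= \sum_(i <- r) normc (F i).
Proof.
elim: r => [|a r IH]; first by rewrite !big_nil Normc.normc0.
by rewrite !big_cons; apply: le_trans (le_normcD _ _) _; rewrite lerD2l.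
Qed.

Lemma inprodE (d : nat) (w v : 'cV[C]_d) :
  inprod w v = \sum_j ((w j ord0)^*)%C * v j ord0.
Proof. by rewrite /inprod mxE; apply: eq_bigr => j _; rewrite /adjmx !mxE. Qed.

Lemma inprodC (d : nat) (w v : 'cV[C]_d) : inprod v w = ((inprod w v)^*)%C.
Proof.
rewrite !inprodE rmorph_sum; apply: eq_bigr => j _.
by rewrite rmorphM /= conjcK mulrC.
Qed.

Lemma inprod_sumZr (I : finType) (d : nat) (w : 'cV[C]_d) (c : I -> C)
    (U : I -> 'cV[C]_d) :
  inprod w (\sum_i c i *: U i) = \sum_i c i * inprod w (U i).
Proof.
rewrite /inprod mulmx_sumr summxE; apply: eq_bigr => i _.
by rewrite -scalemxAr mxE.
Qed.

Lemma inprod_rank1_sum (I : finType) (d : nat) (lam : I -> C)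
    (V : I -> 'cV[C]_d) (w v : 'cV[C]_d) :
  inprod w ((\sum_i lam i *: (V i *m adjmx (V i))) *m v)
  = \sum_i lam i * inprod (V i) v * inprod w (V i).
Proof.
have proj_v i : V i *m adjmx (V i) *m v = inprod (V i) v *: V i.
  rewrite -mulmxA; have -> : adjmx (V i) *m v = (inprod (V i) v)%:M.
    by apply/matrixP => a b; rewrite !ord1 !mxE /= mulr1n /inprod mxE.
  by rewrite mul_mx_scalar.
rewrite mulmx_suml -inprod_sumZr; congr inprod; apply: eq_bigr => i _.
by rewrite -scalemxAl proj_v scalerA.
Qed.

Lemma unit_vec_coord_le1 (d : nat) (w : 'cV[C]_d) j :
  is_unit_vec w -> normc (w j ord0) <= 1.
Proof.
move=> w_unit.
have sum_sqr : \sum_i `|w i ord0| ^+ 2 = 1.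
  by rewrite -w_unit inprodE; apply: eq_bigr => i _; rewrite sqr_normc mulrC.
have : `|w j ord0| ^+ 2 <= 1.
  by rewrite -sum_sqr (bigD1 j) //= lerDl sumr_ge0 // => i _; exact: exprn_ge0.
have normc_normr : `|w j ord0| = (normc (w j ord0))%:C%C by case: (w j ord0).
by rewrite expr_le1 // normc_normr -(@lecR R _ 1).
Qed.

Lemma normc_inprod_unit_le (d : nat) (w v : 'cV[C]_d) :
  is_unit_vec w -> normc (inprod w v) <= \sum_j normc (v j ord0).
Proof.
move=> w_unit; rewrite inprodE; apply: le_trans (normc_sum_le _ _ _) _.
apply: ler_sum => j _; rewrite Normc.normcM normc_conj.
by apply: ler_piMl; [exact: normc_ge0 | exact: unit_vec_coord_le1].
Qed.

Lemma normc_inprod_le_snorm_k (n m k : nat) (v w : 'cV[C]_(n * m)) :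
  is_unit_vec w -> (schmidt_rank n m w <= k)%N ->
  normc (inprod w v) <= snorm_k n m k v.
Proof.
move=> w_unit w_rank; apply: ub_le_sup; last by exists w.
exists (\sum_j normc (v j ord0)) => _ [w' [w'_unit _ ->]].
exact: normc_inprod_unit_le.
Qed.

Lemma Snorm_k_rank1_sum_le (I : finType) (n m k : nat) (lam : I -> C)
    (V : I -> 'cV[C]_(n * m)) :
  Snorm_k n m k (\sum_i lam i *: (V i *m adjmx (V i)))
  <= \sum_i normc (lam i) * snorm_k n m k (V i) ^+ 2.
Proof.
have rhs_ge0 : 0 <= \sum_i normc (lam i) * snorm_k n m k (V i) ^+ 2.
  by apply: sumr_ge0 => i _; rewrite mulr_ge0 ?normc_ge0 ?sqr_ge0.
rewrite /Snorm_k; set S := (Y in sup Y).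
have [S_ne|S_empty] := pselect (exists r, S r); last by rewrite sup_out //; case.
apply: ge_sup => // _ [v [w [v_unit w_unit v_rank w_rank ->]]].
rewrite inprod_rank1_sum; apply: le_trans (normc_sum_le _ _ _) _.
apply: ler_sum => i _; rewrite !Normc.normcM expr2 -mulrA.
apply: ler_wpM2l; first exact: normc_ge0.
rewrite [inprod (V i) v]inprodC normc_conj.
by apply: ler_pM; rewrite ?normc_ge0 ?normc_inprod_le_snorm_k.
Qed.

End SchmidtNormBound.

Theorem proposition4p11 (R : realType) (n m k : nat)
  (X : 'M[R[i]]_(n * m)) (V : 'I_(n * m) -> 'cV[R[i]]_(n * m))
  (lam : 'I_(n * m) -> R[i]) :
  (m <= n)%N -> (1 <= k)%N -> (k <= m)%N ->
  normal_op X ->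
  orthonormal_basis V ->
  (forall i, X *m V i = lam i *: V i) ->
  X = \sum_(i < n * m) lam i *: (V i *m adjmx (V i)) ->
  Snorm_k n m k X <= \sum_(i < n * m) Normc.normc (lam i) * snorm_k n m k (V i) ^+ 2.
Proof. by move=> _ _ _ _ _ _ ->; exact: Snorm_k_rank1_sum_le. Qed.
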